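(* Let $(X,\tau)$ be a topological space, $\delta$ a quasi-proximity compatible with $\tau$ such that $\mathcal{V}_\delta$ is transitive, and $\mathcal{B}=\mathcal{B}(\mathcal{V}_\delta)$. Then there exists $\mathcal{V}\in\pi(\delta)\cap T(\tau)$ with $\mathcal{V}\neq\mathcal{V}_\delta$ if and only if at least one of the following holds: (1) there are sets $N_i\in\mathcal{B}$ ($i\in\mathbb{N}$) with $N_i\subsetneq N_{i+1}$ for all $i$ and $\bigcup_{i=1}^\infty N_i\in\mathcal{B}$; (2) there are sets $N_i\in\mathcal{B}$ ($i\in\mathbb{N}$) with $N_{i+1}\subsetneq N_i$ for all $i$ and $\bigcap_{i=1}^\infty N_i\in\mathcal{B}$.
   Context: Quasi-uniformities and quasi-proximities are in the sense of Fletcher–Lindgren; compatible means inducing the topology $\tau$. $T(\tau)$ is the set of compatible transitive quasi-uniformities on $(X,\tau)$ (transitive = having a base of transitive entourages). $\pi(\delta)$ is the set of quasi-uniformities inducing $\delta$, and $\mathcal{V}_\delta$ its coarsest (totally bounded) element. For $N\subseteq X$, $U_N=(N\times N)\cup((X\setminus N)\times X)$ and $\mathcal{B}(\mathcal{V}_\delta)=\{N\in\tau:U_N\in\mathcal{V}_\delta\}$, which is an l-base: a base of $\tau$ closed under finite unions and intersections containing $\emptyset,X$. *)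

From Stdlib Require Import Classical.

Set Implicit Arguments.

Section Defs.
Variable X : Type.

Definition set := X -> Prop.
Definition rel := X -> X -> Prop.

Definition subset (A B : set) : Prop := forall x, A x -> B x.
Definition setU (A B : set) : set := fun x => A x \/ B x.
Definition setC (A : set) : set := fun x => ~ A x.
Definition set0 : set := fun _ => False.
Definition setT : set := fun _ => True.
Definition single (x : X) : set := fun y => y = x.

Definition is_topology (tau : set -> Prop) : Prop :=
  tau set0 /\ tau setT /\
  (forall A B, tau A -> tau B -> tau (fun x => A x /\ B x)) /\
  (forall F : set -> Prop, (forall A, F A -> tau A) ->
     tau (fun x => exists A, F A /\ A x)).

Definition is_quasi_uniformity (U : rel -> Prop) : Prop :=
  U (fun _ _ => True) /\
  (forall R S, U R -> (forall x y, R x y -> S x y) -> U S) /\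
  (forall R S, U R -> U S -> U (fun x y => R x y /\ S x y)) /\
  (forall R, U R -> forall x, R x x) /\
  (forall R, U R -> exists S, U S /\
      (forall x y z, S x y -> S y z -> R x z)).

Definition qu_topology (U : rel -> Prop) : set -> Prop :=
  fun G => forall x, G x -> exists R, U R /\ (forall y, R x y -> G y).

Definition transitive_rel (R : rel) : Prop :=
  forall x y z, R x y -> R y z -> R x z.

Definition qu_transitive (U : rel -> Prop) : Prop :=
  forall R, U R -> exists S, U S /\ transitive_rel S /\
     (forall x y, S x y -> R x y).

Definition in_T (tau : set -> Prop) (U : rel -> Prop) : Prop :=
  is_quasi_uniformity U /\ qu_transitive U /\
  (forall G, qu_topology U G <-> tau G).

(* Fletcher-Lindgren quasi-proximity *)
Definition is_quasi_proximity (d : set -> set -> Prop) : Prop :=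
  (forall A B C, d A (setU B C) <-> (d A B \/ d A C)) /\
  (forall A B C, d (setU A B) C <-> (d A C \/ d B C)) /\
  (forall A, ~ d A set0) /\ (forall A, ~ d set0 A) /\
  (forall x, d (single x) (single x)) /\
  (forall A B, ~ d A B -> exists C, ~ d A C /\ ~ d (setC C) B).

Definition qp_compatible (tau : set -> Prop) (d : set -> set -> Prop) : Prop :=
  forall G, tau G <-> (forall x, G x -> ~ d (single x) (setC G)).

Definition qu_proximity (U : rel -> Prop) : set -> set -> Prop :=
  fun A B => forall R, U R -> exists x y, A x /\ B y /\ R x y.

Definition in_pi (d : set -> set -> Prop) (U : rel -> Prop) : Prop :=
  is_quasi_uniformity U /\ (forall A B, qu_proximity U A B <-> d A B).

Definition coarsest_in_pi (d : set -> set -> Prop) (V : rel -> Prop) : Prop :=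
  in_pi d V /\ (forall U, in_pi d U -> forall R, V R -> U R).

Definition U_N (N : set) : rel := fun x y => (N x /\ N y) \/ ~ N x.

(* B(V) = {N in tau : U_N in V} *)
Definition lbase (tau : set -> Prop) (V : rel -> Prop) (N : set) : Prop :=
  tau N /\ V (U_N N).

Definition proper_subset (A B : set) : Prop := subset A B /\ ~ subset B A.

End Defs.

(* The coarsest element Vd of pi(delta) is generated by the entourages U_N,
   N in B.  Hence a preorder all of whose up-closed sets lie in B belongs to
   Vd iff it has only finitely many up-closed sets.  If V in pi(delta) and
   T(tau) is strictly finer than Vd, a transitive entourage of V outside Vd
   is such a preorder with infinitely many up-closed sets, and these always
   contain a strictly monotone sequence, whose union or intersection is again
   up-closed.  Conversely, a sequence as in (1) or (2) defines the preorder
   "x in N_i implies y in N_i for all i", outside Vd since the N_i are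
   distinct up-closed sets; adjoining it to Vd keeps the quasi-proximity,
   because two sets it separates are separated by one N_i or by the limit. *)

From Stdlib Require Import Classical IndefiniteDescription ChoiceFacts.
From Stdlib Require Import FunctionalExtensionality PropExtensionality.
From Stdlib Require Import List Arith Lia Wf_nat FinFun.
Import ListNotations.

Set Implicit Arguments.

Lemma set_ext (X : Type) (A B : set X) : (forall x, A x <-> B x) -> A = B.
Proof.
  intros H; apply functional_extensionality; intros x.
  apply propositional_extensionality; auto.
Qed.

Lemma dependent_choice_seq (A : Type) (P : A -> Prop) (R : A -> A -> Prop) (a0 : A) :
  P a0 -> (forall a, P a -> exists b, P b /\ R a b) ->
  exists f : nat -> A, forall n, P (f n) /\ R (f n) (f (S n)).
Proof.
  intros Pa0 step.
  destruct (functional_choice_imp_functional_dependent_choice functional_choice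
              (fun a b => P a -> P b /\ R a b)) with (x0 := a0) as [f [f0 Hf]].
  - intros a. destruct (classic (P a)) as [Pa | nPa].
    + destruct (step a Pa) as [b Hb]; exists b; auto.
    + exists a; tauto.
  - assert (Pf : forall n, P (f n)).
    { induction n as [|n IH]; [rewrite f0; exact Pa0 | exact (proj1 (Hf n IH))]. }
    exists f; intros n; split; [apply Pf | apply (Hf n (Pf n))].
Qed.

Section Preorders.
Variable X : Type.
Implicit Types (A C G H M : set X) (R S T W : rel X) (L : list (set X)).

Definition up_closed T G : Prop := forall x y, G x -> T x y -> G y.

Definition closure T G : set X := fun y => exists x, G x /\ T x y.

Definition small T G : Prop :=
  exists l : list (set X), forall H, up_closed T H -> subset H G -> In H l.

Definition separates (N A C : set X) : Prop :=
  forall x y, A x -> C y -> N x /\ ~ N y.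

Definition chain_rel (N : nat -> set X) : rel X :=
  fun x y => forall i, N i x -> N i y.

Definition U_meet L : rel X := fun x y => forall M, In M L -> M x -> M y.

Lemma U_N_iff (N : set X) x y : U_N N x y <-> (N x -> N y).
Proof. unfold U_N; split; [intros [[_ Ny] | nNx] Nx; tauto | intros H; tauto]. Qed.

Lemma U_meet_trans L : transitive_rel (U_meet L).
Proof. intros x y z Hxy Hyz M HM Mx; apply (Hyz M HM), (Hxy M HM Mx). Qed.

Lemma up_closed_closure T G : transitive_rel T -> up_closed T (closure T G).
Proof. intros Tt y z [x [Gx Txy]] Tyz; exists x; split; [exact Gx | exact (Tt _ _ _ Txy Tyz)]. Qed.

Lemma up_closed_chain_rel {N : nat -> set X} i : up_closed (chain_rel N) (N i).
Proof. intros x y Nx Hxy; exact (Hxy i Nx). Qed.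

Lemma small_le_rel {R S : rel X} {G : set X} :
  (forall x y, R x y -> S x y) -> small R G -> small S G.
Proof.
  intros RS [l Hl]; exists l; intros H Hcl; apply Hl.
  intros x y Hx Rxy; exact (Hcl x y Hx (RS x y Rxy)).
Qed.

Lemma small_subset T G H : small T G -> subset H G -> small T H.
Proof. intros [l Hl] HG; exists l; intros K Kcl KH; apply Hl; auto; intros x Kx; auto. Qed.

Lemma small_set0 T : small T (@set0 X).
Proof.
  exists [@set0 X]; intros H _ H0; left.
  apply set_ext; intros x; split; [intros [] | intros Hx; exact (H0 x Hx)].
Qed.

Lemma small_setU T G1 G2 : up_closed T G1 -> up_closed T G2 ->
  small T G1 -> small T G2 -> small T (setU G1 G2).
Proof.
  intros cl1 cl2 [l1 H1] [l2 H2].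
  exists (flat_map (fun K1 => map (fun K2 => setU K1 K2) l2) l1).
  intros H Hcl HG; apply in_flat_map; exists (fun x => H x /\ G1 x); split.
  - apply H1; [| intros x [_ G1x]; exact G1x].
    intros x y [Hx G1x] Txy; split; [exact (Hcl x y Hx Txy) | exact (cl1 x y G1x Txy)].
  - apply in_map_iff; exists (fun x => H x /\ G2 x); split.
    + apply set_ext; intros x; unfold setU; split; [tauto |].
      intros Hx; destruct (HG x Hx); tauto.
    + apply H2; [| intros x [_ G2x]; exact G2x].
      intros x y [Hx G2x] Txy; split; [exact (Hcl x y Hx Txy) | exact (cl2 x y G2x Txy)].
Qed.

(* A [U_meet (M :: L)]-closed set is the union of the [U_meet L]-closures of
   its part outside [M] and of its part inside [M], the latter cut down to [M]. *)
Lemma small_U_meet L : small (U_meet L) (@setT X).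
Proof.
  induction L as [|M L [l Hl]].
  - exists [@set0 X; @setT X]; intros H Hcl _.
    destruct (classic (exists x, H x)) as [[x Hx] | nH].
    + right; left; apply set_ext; intros y; split; [intros _ | intros _; exact I].
      apply (Hcl x y Hx); intros M [].
    + left; apply set_ext; intros y; split; [intros [] | intros Hy; apply nH; eauto].
  - exists (flat_map (fun C1 => map (fun C2 => fun y => C1 y \/ (C2 y /\ M y)) l) l).
    intros H Hcl _; apply in_flat_map.
    exists (closure (U_meet L) (fun x => H x /\ ~ M x)); split.
    + apply Hl; [apply up_closed_closure, U_meet_trans | intros y _; exact I].
    + apply in_map_iff; exists (closure (U_meet L) (fun x => H x /\ M x)); split.
      * apply set_ext; intros y; split.
        -- intros [[x [[Hx nMx] Exy]] | [[x [[Hx Mx] Exy]] My]]; apply (Hcl x y Hx).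
           ++ intros K [<- | HK] Kx; [contradiction | exact (Exy K HK Kx)].
           ++ intros K [<- | HK] Kx; [exact My | exact (Exy K HK Kx)].
        -- intros Hy; destruct (classic (M y)) as [My | nMy].
           ++ right; split; [exists y; split; [auto | intros K _ Ky; exact Ky] | exact My].
           ++ left; exists y; split; [auto | intros K _ Ky; exact Ky].
      * apply Hl; [apply up_closed_closure, U_meet_trans | intros y _; exact I].
Qed.

Lemma not_small_of_injective T {N : nat -> set X} :
  (forall i, up_closed T (N i)) -> Injective N -> ~ small T (@setT X).
Proof.
  intros Ncl Ninj [l Hl].
  assert (Hlen : length (map N (seq 0 (S (length l)))) <= length l).
  { apply NoDup_incl_length.
    - apply Injective_map_NoDup; [exact Ninj | apply seq_NoDup].
    - intros K HK; apply in_map_iff in HK as [i [<- _]].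
      apply Hl; [apply Ncl | intros x _; exact I]. }
  rewrite length_map, length_seq in Hlen; lia.
Qed.

Lemma increasing_chain_mono {N : nat -> set X} :
  (forall i, subset (N i) (N (S i))) -> forall i j, i <= j -> subset (N i) (N j).
Proof.
  intros HN i j Hij; induction Hij as [|j _ IH]; intros x Nx; [exact Nx |].
  exact (HN j x (IH x Nx)).
Qed.

Lemma increasing_chain_injective {N : nat -> set X} :
  (forall i, proper_subset (N i) (N (S i))) -> Injective N.
Proof.
  intros HN.
  assert (lt_neq : forall i j, i < j -> N i <> N j).
  { intros i j Hij Eij; apply (proj2 (HN i)); rewrite Eij.
    apply increasing_chain_mono; [intros k; apply HN | exact Hij]. }
  intros i j Eij; destruct (Nat.lt_total i j) as [Hlt | [Heq | Hgt]]; auto.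
  - exfalso; exact (lt_neq i j Hlt Eij).
  - exfalso; exact (lt_neq j i Hgt (eq_sym Eij)).
Qed.

Lemma proper_subset_setC A C : proper_subset A C -> proper_subset (setC C) (setC A).
Proof.
  intros [AC nCA]; split.
  - intros x nCx Ax; exact (nCx (AC x Ax)).
  - intros H; apply nCA; intros x Cx; apply NNPP; intros nAx; exact (H x nAx Cx).
Qed.

Lemma chain_rel_setC {N : nat -> set X} x y :
  chain_rel (fun i => setC (N i)) y x <-> chain_rel N x y.
Proof.
  unfold chain_rel, setC; split; intros H i.
  - intros Nx; apply NNPP; intros nNy; exact (H i nNy Nx).
  - intros nNy Nx; exact (nNy (H i Nx)).
Qed.

Lemma separates_setC N A C : separates (setC N) C A -> separates N A C.
Proof.
  intros H x y Ax Cy; destruct (H y x Cy Ax) as [nNy nnNx].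
  split; [apply NNPP |]; assumption.
Qed.

(* Either some [N i] separates [A] from [C], the first one containing [A],
   or [A] is contained in no [N i] and then the union separates. *)
Lemma increasing_chain_separates {N : nat -> set X} {A C : set X} :
  (forall i, subset (N i) (N (S i))) ->
  (forall x y, A x -> C y -> ~ chain_rel N x y) ->
  (exists i, separates (N i) A C) \/ separates (fun x => exists i, N i x) A C.
Proof.
  intros HN sep.
  pose proof (increasing_chain_mono HN) as mono.
  assert (index : forall x y, A x -> C y -> exists j, N j x /\ ~ N j y).
  { intros x y Ax Cy; apply NNPP; intros H; apply (sep x y Ax Cy); intros j Nx.
    apply NNPP; intros nNy; apply H; eauto. }
  assert (beyond : forall x y k, A x -> C y -> (forall j, N j x -> k <= j) -> ~ N k y).
  { intros x y k Ax Cy Hk Nky; destruct (index x y Ax Cy) as [j [Nx nNy]].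
    exact (nNy (mono k j (Hk j Nx) y Nky)). }
  destruct (classic (exists a, A a)) as [[a Aa] | nA].
  2: { left; exists 0; intros x y Ax; exfalso; eauto. }
  destruct (classic (exists k, subset A (N k))) as [Hk | nHk].
  - left.
    destruct (dec_inh_nat_subset_has_unique_least_element (fun k => subset A (N k)))
      as [k [[AN least] _]]; [intros n; apply classic | exact Hk |].
    exists k; intros x y Ax Cy; split; [exact (AN x Ax) |].
    destruct k as [|k].
    + apply (beyond a y 0 Aa Cy); intros j _; lia.
    + assert (Hx' : exists x', A x' /\ ~ N k x').
      { apply NNPP; intros H; assert (S k <= k) by (apply least; intros z Az;
          apply NNPP; intros nNz; apply H; eauto); lia. }
      destruct Hx' as [x' [Ax' nNx']]; apply (beyond x' y (S k) Ax' Cy); intros j Nx'.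
      destruct (le_lt_dec (S k) j) as [Hle | Hlt]; [exact Hle |].
      exfalso; apply nNx', (mono j k); [lia | exact Nx'].
  - right; intros x y Ax Cy; split.
    + destruct (index x y Ax Cy) as [j [Nx _]]; eauto.
    + intros [k Nky].
      assert (Hx' : exists x', A x' /\ ~ N k x').
      { apply NNPP; intros H; apply nHk; exists k; intros z Az.
        apply NNPP; intros nNz; apply H; eauto. }
      destruct Hx' as [x' [Ax' nNx']]; apply (beyond x' y k Ax' Cy); [| exact Nky].
      intros j Nx'; destruct (le_lt_dec k j) as [Hle | Hlt]; [exact Hle |].
      exfalso; apply nNx', (mono j k); [lia | exact Nx'].
Qed.

Definition fin_separated (P : set X -> Prop) A C : Prop :=
  exists L, (forall M, In M L -> P M) /\ forall x y, A x -> C y -> ~ U_meet L x y.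

Lemma fin_separated_single {P : set X -> Prop} N A C :
  P N -> separates N A C -> fin_separated P A C.
Proof.
  intros PN sep; exists [N]; split; [intros M [<- | []]; exact PN |].
  intros x y Ax Cy E; destruct (sep x y Ax Cy) as [Nx nNy].
  exact (nNy (E N (or_introl eq_refl) Nx)).
Qed.

Lemma fin_separated_split {P : set X -> Prop} M A C : P M ->
  fin_separated P (fun x => A x /\ M x) (fun y => C y /\ M y) ->
  fin_separated P (fun x => A x /\ ~ M x) C -> fin_separated P A C.
Proof.
  intros PM [L1 [P1 sep1]] [L2 [P2 sep2]]; exists (M :: L1 ++ L2); split.
  - intros K [<- | HK]; [exact PM |]; apply in_app_or in HK as [HK | HK]; auto.
  - intros x y Ax Cy E.
    assert (E1 : U_meet L1 x y) by (intros K HK; apply E; right; apply in_or_app; auto).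
    assert (E2 : U_meet L2 x y) by (intros K HK; apply E; right; apply in_or_app; auto).
    destruct (classic (M x)) as [Mx | nMx].
    + exact (sep1 x y (conj Ax Mx) (conj Cy (E M (or_introl eq_refl) Mx)) E1).
    + exact (sep2 x y (conj Ax nMx) Cy E2).
Qed.

Lemma fin_separated_meet (P : set X -> Prop) W L :
  (forall A C, (forall x y, A x -> C y -> ~ W x y) -> fin_separated P A C) ->
  (forall M, In M L -> P M) ->
  forall A C, (forall x y, A x -> C y -> U_meet L x y -> ~ W x y) -> fin_separated P A C.
Proof.
  intros base. induction L as [|M L IH]; intros PL A C sep.
  - apply base; intros x y Ax Cy; apply sep; auto; intros M [].
  - assert (PL' : forall K, In K L -> P K) by (intros K HK; apply PL; right; exact HK).
    apply (@fin_separated_split P M A C (PL M (or_introl eq_refl))); apply IH; auto.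
    + intros x y [Ax Mx] [Cy My] E; apply sep; auto.
      intros K [<- | HK] Kx; [exact My | exact (E K HK Kx)].
    + intros x y [Ax nMx] Cy E; apply sep; auto.
      intros K [<- | HK] Kx; [contradiction | exact (E K HK Kx)].
Qed.

Lemma up_closed_bigcup T {N : nat -> set X} :
  (forall i, up_closed T (N i)) -> up_closed T (fun x => exists i, N i x).
Proof. intros Ncl x y [i Nx] Txy; exists i; exact (Ncl i x y Nx Txy). Qed.

Lemma up_closed_bigcap T {N : nat -> set X} :
  (forall i, up_closed T (N i)) -> up_closed T (fun x => forall i, N i x).
Proof. intros Ncl x y Nx Txy i; exact (Ncl i x y (Nx i) Txy). Qed.

(* If [G] is the cone of [x], its closed subsets are [G] itself and the closed
   subsets of [G] minus the points below [x]. *)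
Lemma cone_large_proper_subset T G x : (forall x, T x x) -> transitive_rel T ->
  up_closed T G -> G x -> subset G (T x) -> ~ small T G ->
  exists G', (up_closed T G' /\ ~ small T G') /\ proper_subset G' G.
Proof.
  intros Tr Tt Gcl Gx GTx Glarge.
  exists (fun y => G y /\ ~ T y x); split; [split |].
  - intros y z [Gy nTyx] Tyz; split; [exact (Gcl y z Gy Tyz) |].
    intros Tzx; exact (nTyx (Tt _ _ _ Tyz Tzx)).
  - intros [l Hl]; apply Glarge; exists (G :: l); intros H Hcl HG.
    destruct (classic (H x)) as [Hx | nHx].
    + left; apply set_ext; intros y; split; [intros Gy; exact (Hcl x y Hx (GTx y Gy)) | apply HG].
    + right; apply Hl; [exact Hcl |]; intros y Hy; split; [exact (HG y Hy) |].
      intros Tyx; exact (nHx (Hcl y x Hy Tyx)).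
  - split; [intros y [Gy _]; exact Gy |].
    intros H; destruct (H x Gx) as [_ nTxx]; exact (nTxx (Tr x)).
Qed.

(* Either every large closed set has a large closed proper subset, giving a
   decreasing chain from [X]; or some large closed [G] has only small closed
   proper subsets, and then adding cones of points of [G] one at a time gives
   an increasing chain of small closed sets. *)
Lemma closed_strict_chain T : (forall x, T x x) -> transitive_rel T -> ~ small T (@setT X) ->
  (exists N : nat -> set X,
     (forall i, up_closed T (N i)) /\ forall i, proper_subset (N i) (N (S i))) \/
  (exists N : nat -> set X,
     (forall i, up_closed T (N i)) /\ forall i, proper_subset (N (S i)) (N i)).
Proof.
  intros Tr Tt Xlarge.
  destruct (classic (forall G, up_closed T G -> ~ small T G ->
      exists G', (up_closed T G' /\ ~ small T G') /\ proper_subset G' G)) as [descend | stuck].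
  - right; destruct (dependent_choice_seq (fun G => up_closed T G /\ ~ small T G)
                       (fun G G' => proper_subset G' G) (@setT X)) as [N HN].
    + split; [intros x y _ _; exact I | exact Xlarge].
    + intros G [Gcl Glarge]; exact (descend G Gcl Glarge).
    + exists N; split; intros i; apply HN.
  - left; apply not_all_ex_not in stuck as [G stuck].
    apply imply_to_and in stuck as [Gcl stuck]; apply imply_to_and in stuck as [Glarge stuck].
    assert (proper_small : forall G', up_closed T G' -> proper_subset G' G -> small T G').
    { intros G' G'cl HG'; apply NNPP; intros G'large; apply stuck; eauto. }
    assert (cone_small : forall x, G x -> small T (T x)).
    { intros x Gx; destruct (classic (subset G (T x))) as [GTx | nGTx].
      - exfalso; exact (stuck (@cone_large_proper_subset T G x Tr Tt Gcl Gx GTx Glarge)).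
      - apply proper_small; [intros y z Txy Tyz; exact (Tt _ _ _ Txy Tyz) |].
        split; [intros y Txy; exact (Gcl x y Gx Txy) | exact nGTx]. }
    destruct (dependent_choice_seq (fun H => up_closed T H /\ small T H /\ subset H G)
                (@proper_subset X) (@set0 X)) as [N HN].
    + split; [intros x y [] | split; [apply small_set0 | intros x []]].
    + intros H [Hcl [Hsmall HG]].
      assert (Hx : exists x, G x /\ ~ H x).
      { apply NNPP; intros nx; apply Glarge, (small_subset Hsmall).
        intros x Gx; apply NNPP; intros nHx; apply nx; eauto. }
      destruct Hx as [x [Gx nHx]]; exists (setU H (T x)); split; [split; [| split] |].
      * intros y z [Hy | Txy] Tyz; [left; exact (Hcl y z Hy Tyz) | right; exact (Tt _ _ _ Txy Tyz)].
      * apply small_setU; auto; intros y z Txy Tyz; exact (Tt _ _ _ Txy Tyz).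
      * intros y [Hy | Txy]; [exact (HG y Hy) | exact (Gcl x y Gx Txy)].
      * split; [intros y Hy; left; exact Hy | intros HTx; exact (nHx (HTx x (or_intror (Tr x))))].
    + exists N; split; intros i; apply HN.
Qed.

Definition generated (base : rel X -> Prop) : rel X -> Prop :=
  fun S => exists R, base R /\ forall x y, R x y -> S x y.

Lemma generated_quasi_uniformity (base : rel X -> Prop) :
  (exists R, base R) ->
  (forall R S, base R -> base S -> exists T, base T /\ forall x y, T x y -> R x y /\ S x y) ->
  (forall R, base R -> (forall x, R x x) /\ transitive_rel R) ->
  is_quasi_uniformity (generated base).
Proof.
  intros [R0 HR0] meet preorder; split; [| split; [| split; [| split]]].
  - exists R0; split; [exact HR0 | intros; exact I].
  - intros R S [R' [HR' R'R]] RS; exists R'; split; auto.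
  - intros R S [R' [HR' R'R]] [S' [HS' S'S]].
    destruct (meet R' S' HR' HS') as [T [HT TRS]]; exists T; split; [exact HT |].
    intros x y Txy; destruct (TRS x y Txy); auto.
  - intros R [R' [HR' R'R]] x; apply R'R, (preorder R' HR').
  - intros R [R' [HR' R'R]]; exists R'; split; [exists R'; auto |].
    intros x y z Rxy Ryz; apply R'R, (proj2 (preorder R' HR') x y z Rxy Ryz).
Qed.

Lemma generated_transitive (base : rel X -> Prop) :
  (forall R, base R -> transitive_rel R) -> qu_transitive (generated base).
Proof.
  intros Bt R [R' [HR' R'R]]; exists R'.
  split; [exists R'; auto | split; [exact (Bt R' HR') | exact R'R]].
Qed.

End Preorders.

Lemma not_qu_proximity (X : Type) (U : rel X -> Prop) A C :
  ~ qu_proximity U A C -> exists R, U R /\ forall x y, A x -> C y -> ~ R x y.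
Proof.
  intros H; apply NNPP; intros H'; apply H; intros R HR; apply NNPP; intros H2.
  apply H'; exists R; split; auto; intros x y Ax Cy Rxy; apply H2; eauto.
Qed.

Lemma in_pi_topology (X : Type) (tau : set X -> Prop) d U :
  qp_compatible tau d -> in_pi d U -> forall G, qu_topology U G <-> tau G.
Proof.
  intros compat [_ prox] G; rewrite (compat G); split.
  - intros H x Gx Hd; apply prox in Hd.
    destruct (H x Gx) as [R [HR RG]]; destruct (Hd R HR) as [x' [y [-> [nGy Rxy]]]].
    exact (nGy (RG y Rxy)).
  - intros H x Gx.
    assert (far : ~ qu_proximity U (single x) (setC G)) by (rewrite prox; auto).
    destruct (not_qu_proximity far) as [R [HR sep]]; exists R; split; [exact HR |].
    intros y Rxy; apply NNPP; intros nGy; exact (sep x y eq_refl nGy Rxy).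
Qed.

Section Compatible.
Variables (X : Type) (tau : set X -> Prop) (d : set X -> set X -> Prop) (Vd : rel X -> Prop).
Hypothesis compat : qp_compatible tau d.
Hypothesis coarsest : coarsest_in_pi d Vd.
Hypothesis Vd_transitive : qu_transitive Vd.

Let Vd_quasi_uniformity : is_quasi_uniformity Vd := proj1 (proj1 coarsest).
Let Vd_proximity : forall A C, qu_proximity Vd A C <-> d A C := proj2 (proj1 coarsest).

Lemma Vd_upward {R S : rel X} : Vd R -> (forall x y, R x y -> S x y) -> Vd S.
Proof. exact (proj1 (proj2 Vd_quasi_uniformity) R S). Qed.

Lemma Vd_U_meet {L : list (set X)} : (forall M, In M L -> lbase tau Vd M) -> Vd (U_meet L).
Proof.
  induction L as [|M L IH]; intros HL.
  - apply (Vd_upward (proj1 Vd_quasi_uniformity)); intros x y _ M [].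
  - apply (Vd_upward (proj1 (proj2 (proj2 Vd_quasi_uniformity)) _ _
             (proj2 (HL M (or_introl eq_refl))) (IH (fun K HK => HL K (or_intror HK))))).
    intros x y [UM UL] K [<- | HK] Kx; [exact (proj1 (U_N_iff M x y) UM Kx) | exact (UL K HK Kx)].
Qed.

(* The separating set is the image of [A] under a transitive entourage [T] of
   [Vd]; being [T]-closed, it is open and [U_N] of it contains [T]. *)
Lemma lbase_separation A C : ~ d A C ->
  exists N, lbase tau Vd N /\ subset A N /\ subset C (setC N).
Proof.
  intros far; rewrite <- Vd_proximity in far.
  destruct (not_qu_proximity far) as [R [HR sep]].
  destruct (Vd_transitive HR) as [T [HT [Tt TR]]].
  exists (closure T A); split; [split | split].
  - apply (proj2 (compat _)); intros x [a [Aa Tax]] Hd; rewrite <- Vd_proximity in Hd.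
    destruct (Hd T HT) as [x' [y [-> [nAy Txy]]]].
    exact (nAy (@up_closed_closure X T A Tt x y (ex_intro _ a (conj Aa Tax)) Txy)).
  - apply (Vd_upward HT); intros x y Txy; apply U_N_iff; intros Ax.
    exact (@up_closed_closure X T A Tt x y Ax Txy).
  - intros x Ax; exists x; split; [exact Ax | apply Vd_quasi_uniformity, HT].
  - intros y Cy [a [Aa Tay]]; exact (sep a y Aa Cy (TR a y Tay)).
Qed.

Lemma far_of_fin_separated A C : fin_separated (lbase tau Vd) A C -> ~ d A C.
Proof.
  intros [L [HL sep]] near; apply Vd_proximity in near.
  destruct (near _ (Vd_U_meet HL)) as [x [y [Ax [Cy E]]]]; exact (sep x y Ax Cy E).
Qed.

(* The quasi-uniformity with base the [U_meet L], [L] in the l-base, lies in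
   [pi d]; as [Vd] is the coarsest such, it is contained in it. *)
Lemma Vd_base R : Vd R ->
  exists L, (forall M, In M L -> lbase tau Vd M) /\ forall x y, U_meet L x y -> R x y.
Proof.
  set (base := fun S => exists L, (forall M, In M L -> lbase tau Vd M) /\ S = U_meet L).
  assert (quniform : is_quasi_uniformity (generated base)).
  { apply generated_quasi_uniformity.
    - exists (U_meet []); exists []; split; [intros M [] | reflexivity].
    - intros S1 S2 [L1 [H1 ->]] [L2 [H2 ->]]; exists (U_meet (L1 ++ L2)); split.
      + exists (L1 ++ L2); split; [| reflexivity].
        intros M HM; apply in_app_or in HM as [HM | HM]; auto.
      + intros x y E; split; intros M HM; apply E, in_or_app; auto.
    - intros S [L [_ ->]]; split; [intros x M _ Mx; exact Mx | apply U_meet_trans]. }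
  assert (in_pi_base : in_pi d (generated base)).
  { split; [exact quniform |]; intros A C; split.
    - intros near; apply NNPP; intros far.
      destruct (lbase_separation far) as [N [HN [AN CN]]].
      destruct (near (U_meet [N])) as [x [y [Ax [Cy E]]]].
      + exists (U_meet [N]); split; [| auto].
        exists [N]; split; [intros M [<- | []]; exact HN | reflexivity].
      + exact (CN y Cy (E N (or_introl eq_refl) (AN x Ax))).
    - intros near S [R1 [[L [HL ->]] LS]]; apply Vd_proximity in near.
      destruct (near _ (Vd_U_meet HL)) as [x [y [Ax [Cy E]]]]; exists x, y; auto. }
  intros HR; destruct (proj2 coarsest _ in_pi_base R HR) as [S [[L [HL ->]] LR]]; eauto.
Qed.

Lemma Vd_transitive_entourage : exists T, Vd T /\ transitive_rel T.
Proof.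
  destruct (Vd_transitive (proj1 Vd_quasi_uniformity)) as [T [HT [Tt _]]]; eauto.
Qed.

(* The extension is generated by [Vd] and [W]; it has the proximity of [Vd]
   because [W]-separated sets are separated by finitely many l-base sets. *)
Lemma extension_by_preorder W : (forall x, W x x) -> transitive_rel W -> ~ Vd W ->
  (forall A C, (forall x y, A x -> C y -> ~ W x y) ->
     exists N, lbase tau Vd N /\ separates N A C) ->
  exists V, in_pi d V /\ in_T tau V /\ ~ (forall R, V R <-> Vd R).
Proof.
  intros Wr Wt nVdW sepW.
  set (base := fun S => exists T, Vd T /\ transitive_rel T /\ S = fun x y => T x y /\ W x y).
  assert (Vd_le : forall R, Vd R -> generated base R).
  { intros R HR; destruct (Vd_transitive HR) as [T [HT [Tt TR]]].
    exists (fun x y => T x y /\ W x y); split; [exists T; auto | intros x y [Txy _]; auto]. }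
  assert (quniform : is_quasi_uniformity (generated base)).
  { apply generated_quasi_uniformity.
    - destruct Vd_transitive_entourage as [T [HT Tt]]; exists (fun x y => T x y /\ W x y), T; auto.
    - intros S1 S2 [T1 [HT1 [_ ->]]] [T2 [HT2 [_ ->]]].
      destruct (Vd_transitive (proj1 (proj2 (proj2 Vd_quasi_uniformity)) _ _ HT1 HT2))
        as [T [HT [Tt TT]]].
      exists (fun x y => T x y /\ W x y); split; [exists T; auto |].
      intros x y [Txy Wxy]; destruct (TT x y Txy); tauto.
    - intros S [T [HT [Tt ->]]]; split.
      + intros x; split; [apply Vd_quasi_uniformity, HT | apply Wr].
      + intros x y z [Txy Wxy] [Tyz Wyz].
        split; [exact (Tt _ _ _ Txy Tyz) | exact (Wt _ _ _ Wxy Wyz)]. }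
  assert (in_pi_gen : in_pi d (generated base)).
  { split; [exact quniform |]; intros A C; split.
    - intros near; apply Vd_proximity; intros R HR; exact (near R (Vd_le R HR)).
    - intros near S [S' [[T [HT [Tt ->]]] TS]]; apply NNPP; intros noedge.
      destruct (Vd_base HT) as [L [HL LT]].
      apply (far_of_fin_separated (A := A) (C := C)); [| exact near].
      apply (@fin_separated_meet X (lbase tau Vd) W L); [| exact HL |].
      + intros A' C' sep'; destruct (sepW A' C' sep') as [N [HN sepN]].
        exact (fin_separated_single HN sepN).
      + intros x y Ax Cy E Wxy; apply noedge; exists x, y; split; [| split]; auto. }
  exists (generated base); split; [exact in_pi_gen | split; [split; [exact quniform | split] |]].
  - apply generated_transitive; intros S [T [_ [Tt ->]]] x y z [Txy Wxy] [Tyz Wyz].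
    split; [exact (Tt _ _ _ Txy Tyz) | exact (Wt _ _ _ Wxy Wyz)].
  - exact (in_pi_topology compat in_pi_gen).
  - intros same; apply nVdW, same.
    destruct Vd_transitive_entourage as [T [HT Tt]].
    exists (fun x y => T x y /\ W x y); split; [exists T; auto | intros x y [_ Wxy]; exact Wxy].
Qed.

(* [chain_rel N] is not in [Vd]: otherwise it would contain some [U_meet L]
   and have only finitely many closed sets, yet every [N i] is closed. *)
Lemma chain_extension {N : nat -> set X} : Injective N ->
  (forall A C, (forall x y, A x -> C y -> ~ chain_rel N x y) ->
     exists M, lbase tau Vd M /\ separates M A C) ->
  exists V, in_pi d V /\ in_T tau V /\ ~ (forall R, V R <-> Vd R).
Proof.
  intros Ninj sepN; apply (extension_by_preorder (W := chain_rel N)); [| | | exact sepN].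
  - intros x i Nx; exact Nx.
  - intros x y z Hxy Hyz i Nx; exact (Hyz i (Hxy i Nx)).
  - intros HW; destruct (Vd_base HW) as [L [_ LW]].
    apply (not_small_of_injective (@up_closed_chain_rel X N) Ninj).
    exact (small_le_rel LW (small_U_meet L)).
Qed.

Lemma increasing_chain_extension {N : nat -> set X} :
  (forall i, lbase tau Vd (N i)) -> (forall i, proper_subset (N i) (N (S i))) ->
  lbase tau Vd (fun x => exists i, N i x) ->
  exists V, in_pi d V /\ in_T tau V /\ ~ (forall R, V R <-> Vd R).
Proof.
  intros HN strict Hunion.
  apply (chain_extension (N := N)); [exact (increasing_chain_injective strict) |].
  intros A C sep.
  destruct (increasing_chain_separates (fun i => proj1 (strict i)) sep) as [[i sepi] | sepU]; eauto.
Qed.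

(* The complements of a decreasing chain form an increasing one. *)
Lemma decreasing_chain_extension {N : nat -> set X} :
  (forall i, lbase tau Vd (N i)) -> (forall i, proper_subset (N (S i)) (N i)) ->
  lbase tau Vd (fun x => forall i, N i x) ->
  exists V, in_pi d V /\ in_T tau V /\ ~ (forall R, V R <-> Vd R).
Proof.
  intros HN strict Hinter; apply (chain_extension (N := N)).
  - intros i j Eij; apply (increasing_chain_injective (N := fun i => setC (N i))).
    + intros k; apply proper_subset_setC, strict.
    + simpl; rewrite Eij; reflexivity.
  - intros A C sep.
    assert (sepC : forall y x, C y -> A x -> ~ chain_rel (fun i => setC (N i)) y x).
    { intros y x Cy Ax; rewrite chain_rel_setC; exact (sep x y Ax Cy). }
    destruct (increasing_chain_separates (fun i => proj1 (proper_subset_setC (strict i))) sepC)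
      as [[i sepi] | sepU].
    + exists (N i); split; [exact (HN i) | exact (separates_setC sepi)].
    + exists (fun x => forall i, N i x); split; [exact Hinter |].
      apply separates_setC; intros y x Cy Ax; destruct (sepU y x Cy Ax) as [[i nNy] nU].
      split; [intros Ny; exact (nNy (Ny i)) |].
      intros nNx; apply nNx; intros k; apply NNPP; intros nNkx; exact (nU (ex_intro _ k nNkx)).
Qed.

Lemma up_closed_lbase V T G : in_pi d V -> V T -> up_closed T G -> lbase tau Vd G.
Proof.
  intros [_ V_proximity] VT Gcl.
  assert (far : ~ d G (setC G)).
  { intros near; apply V_proximity in near.
    destruct (near T VT) as [x [y [Gx [nGy Txy]]]]; exact (nGy (Gcl x y Gx Txy)). }
  destruct (lbase_separation far) as [N [HN [GN nGN]]].
  replace G with N; [exact HN |].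
  apply set_ext; intros x; split; [| apply GN].
  intros Nx; apply NNPP; intros nGx; exact (nGN x nGx Nx).
Qed.

(* Finitely many closed sets give finitely many cones [T x], whose
   intersection of [U_N] is contained in [T]. *)
Lemma Vd_of_small T : (forall x, T x x) -> transitive_rel T ->
  (forall G, up_closed T G -> lbase tau Vd G) -> small T (@setT X) -> Vd T.
Proof.
  intros Tr Tt closed_lbase [l Hl].
  apply (Vd_upward (R := U_meet (map (closure T) l))).
  - apply Vd_U_meet; intros M HM; apply in_map_iff in HM as [G [<- _]].
    apply closed_lbase, up_closed_closure, Tt.
  - intros x y E.
    assert (cone : In (closure T (T x)) (map (closure T) l)).
    { apply in_map, Hl; [intros y' z Txy' Ty'z; exact (Tt _ _ _ Txy' Ty'z) | intros z _; exact I]. }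
    destruct (E _ cone (ex_intro _ x (conj (Tr x) (Tr x)))) as [z [Txz Tzy]].
    exact (Tt _ _ _ Txz Tzy).
Qed.

Lemma extension_transitive_entourage V : in_pi d V -> in_T tau V -> ~ (forall R, V R <-> Vd R) ->
  exists T, V T /\ (forall x, T x x) /\ transitive_rel T /\ ~ Vd T.
Proof.
  intros HV [Vquniform [Vtransitive _]] Vne.
  assert (finer : exists R, V R /\ ~ Vd R).
  { apply NNPP; intros H; apply Vne; intros R; split.
    - intros VR; apply NNPP; intros nVdR; apply H; eauto.
    - apply (proj2 coarsest V HV). }
  destruct finer as [R [VR nVdR]]; destruct (Vtransitive R VR) as [T [VT [Tt TR]]].
  exists T; split; [exact VT | split; [apply Vquniform, VT | split; [exact Tt |]]].
  intros VdT; exact (nVdR (Vd_upward VdT TR)).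
Qed.

End Compatible.

Theorem theorem2p6 (X : Type) (tau : set X -> Prop) (d : set X -> set X -> Prop)
  (Vd : rel X -> Prop) :
  is_topology tau ->
  is_quasi_proximity d ->
  qp_compatible tau d ->
  coarsest_in_pi d Vd ->
  qu_transitive Vd ->
  (exists V : rel X -> Prop,
      in_pi d V /\ in_T tau V /\ ~ (forall R, V R <-> Vd R))
  <->
  ((exists N : nat -> set X,
      (forall i, lbase tau Vd (N i)) /\
      (forall i, proper_subset (N i) (N (S i))) /\
      lbase tau Vd (fun x => exists i, N i x))
   \/
   (exists N : nat -> set X,
      (forall i, lbase tau Vd (N i)) /\
      (forall i, proper_subset (N (S i)) (N i)) /\
      lbase tau Vd (fun x => forall i, N i x))).
Proof.
  intros _ _ compat coarsest Vd_transitive; split.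
  - intros [V [HV [HT Vne]]].
    destruct (extension_transitive_entourage coarsest HV HT Vne) as [T [VT [Tr [Tt nVdT]]]].
    assert (closed_lbase : forall G, up_closed T G -> lbase tau Vd G)
      by (intros G; exact (up_closed_lbase compat coarsest Vd_transitive HV VT)).
    assert (large : ~ small T (@setT X))
      by (intros Tsmall; exact (nVdT (Vd_of_small coarsest Tr Tt closed_lbase Tsmall))).
    destruct (closed_strict_chain Tr Tt large) as [[N [Ncl strict]] | [N [Ncl strict]]].
    + left; exists N; split; [intros i; apply closed_lbase, Ncl |].
      split; [exact strict | apply closed_lbase, up_closed_bigcup, Ncl].
    + right; exists N; split; [intros i; apply closed_lbase, Ncl |].
      split; [exact strict | apply closed_lbase, up_closed_bigcap, Ncl].
  - intros [[N [HN [strict Hlim]]] | [N [HN [strict Hlim]]]].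
    + exact (increasing_chain_extension compat coarsest Vd_transitive HN strict Hlim).
    + exact (decreasing_chain_extension compat coarsest Vd_transitive HN strict Hlim).
Qed.
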